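(* Let $\mathcal{A}$ be a finite alphabet and $\mathcal{F}$ a finite set of finite patterns on $\mathbb{Z}^d$. Player $B$ has a winning strategy in $\Gamma(\mathcal{A},\mathcal{F},\mathbb{Z}^d)$ if and only if, for every integer $n\ge 1$, player $B$ has a winning strategy in $\Gamma(\mathcal{A},\mathcal{F},\llbracket -n,n\rrbracket^d)$.
   Context: Fix $d\ge 1$ and a finite alphabet $\mathcal{A}$. A pattern is a pair $p=(S,f)$ with $S\subseteq\mathbb{Z}^d$ and $f\in\mathcal{A}^S$. A finite pattern $q=(S',g)$ appears in a pattern $p=(S,f)$ if there is $v\in\mathbb{Z}^d$ with $v+S'\subseteq S$ and $f(v+j)=g(j)$ for all $j\in S'$. For a finite set $\mathcal{F}$ of finite patterns and $E\subseteq\mathbb{Z}^d$, the Domino game $\Gamma(\mathcal{A},\mathcal{F},E)$ is played by two players $A$ and $B$ who alternate turns, $A$ moving first, starting from the empty pattern. On each turn the current player either passes, or chooses a cell $i\in E$ not yet coloured and a colour $a\in\mathcal{A}$ and colours $i$ with $a$. As soon as some pattern of $\mathcal{F}$ appears in the current pattern, the game ends and $A$ wins; the game also ends if all of $E$ is coloured. $B$ wins if no pattern of $\mathcal{F}$ ever appears. A strategy is winning for a player if that player wins every game in which they follow it. $\llbracket -n,n\rrbracket=\{-n,\dots,n\}$. *)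

From mathcomp Require Import all_boot all_order all_algebra.
Set Implicit Arguments. Unset Strict Implicit. Unset Printing Implicit Defensive.
Import GRing.Theory Num.Theory.
Local Open Scope ring_scope.

Definition cell (d : nat) := 'rV[int]_d.

(* A finite pattern (S', g) is encoded as the finite list of pairs (j, g j), j in S'. *)
Definition fpattern (d : nat) (A : finType) := seq (cell d * A).

(* well-formed: each cell occurs at most once (so the list is the graph of a function) *)
Definition wf_pattern d (A : finType) (p : fpattern d A) : bool := uniq (map fst p).

Definition partial_col d (A : finType) := cell d -> option A.

Definition appears d (A : finType) (q : fpattern d A) (c : partial_col d A) : Prop :=
  exists v : cell d, forall ja, ja \in q -> c (v + ja.1) = Some ja.2.

(* A move: None = pass, Some (i, a) = colour cell i with colour a. *)
Definition move d (A : finType) := option (cell d * A).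

Definition apply_move d (A : finType) (c : partial_col d A) (m : move d A)
  : partial_col d A :=
  match m with
  | None => c
  | Some (i, a) => fun x => if x == i then Some a else c x
  end.

Definition state d (A : finType) (h : seq (move d A)) : partial_col d A :=
  foldl (@apply_move d A) (fun _ => None) h.

Definition legal d (A : finType) (E : pred (cell d)) (c : partial_col d A)
  (m : move d A) : Prop :=
  match m with
  | None => True
  | Some (i, a) => E i /\ c i = None
  end.

Definition strategy d (A : finType) := seq (move d A) -> move d A.

Definition hist d (A : finType) (m : nat -> move d A) (t : nat) := mkseq m t.

(* A plays at even times (A moves first), B at odd times.
   A strategy sigma for B is winning in Gamma(A,F,E) if it always proposes
   legal moves and, in every play where all moves are legal and B follows
   sigma, no pattern of F ever appears.  (Once E is fully coloured only passes
   are legal, and once a pattern of F appears B has lost, so modelling plays as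
   infinite sequences of moves is faithful.) *)
Definition B_winning_strategy d (A : finType) (F : seq (fpattern d A))
  (E : pred (cell d)) (sigma : strategy d A) : Prop :=
  (forall h, legal E (state h) (sigma h)) /\
  forall m : nat -> move d A,
    (forall t, legal E (state (hist m t)) (m t)) ->
    (forall t, odd t -> m t = sigma (hist m t)) ->
    forall t q, q \in F -> ~ appears q (state (hist m t)).

Definition B_wins d (A : finType) (F : seq (fpattern d A)) (E : pred (cell d))
  : Prop := exists sigma, B_winning_strategy F E sigma.

Definition box (d : nat) (n : nat) : pred (cell d) :=
  fun x => [forall i : 'I_d, (- (n%:Z) <= x ord0 i) && (x ord0 i <= n%:Z)].
Arguments box : clear implicits.

From mathcomp Require Import all_boot all_order all_algebra.
From mathcomp Require Import zify.
From Stdlib Require Import Classical ClassicalEpsilon.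

(* B wins on a board E iff the empty colouring lies in a B-safe set: a set of
   pattern-free positions from which every legal move of A has a reply of B
   leading back into the set.  Restricting positions to a smaller board maps
   safe sets to safe sets, B passing whenever it would play off the board; this
   gives the easy direction.

   Conversely, call c a limit of winning positions if for every k some winning
   position of a box game on [[-n,n]]^d, n >= k, contains c and agrees with it
   on [[-k,k]]^d.  These limits form a safe set on Z^d.  After a move of A, the
   winning replies of B in the approximating box games either leave every fixed
   box, and then passing is safe, or at some precision j they all lie in the
   box [[-j,j]]^d.  There are finitely many moves in that box, and a reply at
   precision k is a reply at every lower precision, so by the pigeonhole
   principle a single move is a reply at every precision. *)

Set Implicit Arguments. Unset Strict Implicit. Unset Printing Implicit Defensive.

Section Positions.

Variables (d : nat) (A : finType).
Implicit Types (c : partial_col d A) (mv b : move d A) (E : pred (cell d)).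

Definition subcol c c' := forall x a, c x = Some a -> c' x = Some a.

Lemma subcol_trans c1 c2 c3 : subcol c1 c2 -> subcol c2 c3 -> subcol c1 c3.
Proof. by move=> H12 H23 x a /H12 /H23. Qed.

Lemma appears_subcol (q : fpattern d A) c c' :
  subcol c c' -> appears q c -> appears q c'.
Proof. by move=> Hcc' [v Hv]; exists v => ja /Hv /Hcc'. Qed.

Lemma subcol_apply_move c c' mv :
  subcol c c' -> subcol (apply_move c mv) (apply_move c' mv).
Proof.
by case: mv => [[i a]|] Hcc' x b //=; [case: eqP => // _ /Hcc' | move/Hcc'].
Qed.

Lemma legal_subcol E c mv : legal E c mv -> subcol c (apply_move c mv).
Proof.
case: mv => [[i a]|] /=; last by move=> _ x b.
by move=> [_ Hi] x b; case: eqP => [->|//]; rewrite Hi.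
Qed.

Lemma state_rcons (h : seq (move d A)) mv :
  state (rcons h mv) = apply_move (state h) mv.
Proof. by rewrite /state foldl_rcons. Qed.

Lemma state_histS (m : nat -> move d A) t :
  state (hist m t.+1) = apply_move (state (hist m t)) (m t).
Proof. by rewrite /hist mkseqS state_rcons. Qed.

End Positions.

Section Plays.

Variables (d : nat) (A : finType).
Implicit Types (sA sB : strategy d A) (m : nat -> move d A).

Fixpoint play_hist sB sA t : seq (move d A) :=
  if t is t'.+1 then
    let h := play_hist sB sA t' in rcons h ((if odd t' then sB else sA) h)
  else [::].

Definition play sB sA t : move d A := (if odd t then sB else sA) (play_hist sB sA t).

Lemma hist_play sB sA t : hist (play sB sA) t = play_hist sB sA t.
Proof. by elim: t => // t IH; rewrite /hist mkseqS -/(hist _ _) IH. Qed.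

Lemma play_odd sB sA t : odd t -> play sB sA t = sB (hist (play sB sA) t).
Proof. by rewrite /play hist_play => ->. Qed.

Lemma play_even sB sA t : ~~ odd t -> play sB sA t = sA (hist (play sB sA) t).
Proof. by rewrite /play hist_play => /negbTE ->. Qed.

Lemma eq_hist_play sB sA m t0 :
  (forall t, (t < t0)%N -> m t = (if odd t then sB else sA) (hist m t)) ->
  forall t, (t <= t0)%N -> hist (play sB sA) t = hist m t.
Proof.
move=> Hm; elim=> // t IH Ht.
have IHt := IH (ltnW Ht).
by rewrite /hist !mkseqS -!/(hist _ _) IHt (Hm t Ht) /play -hist_play IHt.
Qed.

End Plays.

Section SafeSets.

Variables (d : nat) (A : finType) (F : seq (fpattern d A)) (E : pred (cell d)).
Implicit Types (c : partial_col d A) (mv b : move d A) (W : partial_col d A -> Prop).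

Definition pattern_free c := forall q, q \in F -> ~ appears q c.

Lemma pattern_free_subcol c c' : subcol c c' -> pattern_free c' -> pattern_free c.
Proof. by move=> Hcc' Hc' q /Hc' Hq /(appears_subcol Hcc'). Qed.

Definition B_safe W := forall c, W c -> pattern_free c /\
  forall mv, legal E c mv ->
    exists b, legal E (apply_move c mv) b /\ W (apply_move (apply_move c mv) b).

Definition B_winning_pos c := exists W, B_safe W /\ W c.

Lemma B_winning_pos_safe : B_safe B_winning_pos.
Proof.
move=> c [W [HW Wc]]; have [Hfree Hstep] := HW c Wc; split=> // mv /Hstep [b [Hb Wb]].
by exists b; split=> //; exists W.
Qed.

Definition consistent_play (sigma : strategy d A) (m : nat -> move d A) :=
  (forall t, legal E (state (hist m t)) (m t)) /\
  (forall t, odd t -> m t = sigma (hist m t)).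

Lemma consistent_play_extend sigma m t0 mv :
  (forall h, legal E (state h) (sigma h)) -> consistent_play sigma m -> ~~ odd t0 ->
  legal E (state (hist m t0)) mv ->
  exists2 m', consistent_play sigma m' & hist m' t0.+1 = rcons (hist m t0) mv.
Proof.
move=> Hsigma [Hm Hmodd] Ht0 Hmv.
pose sA : strategy d A := fun h =>
  if (size h < t0)%N then m (size h) else if size h == t0 then mv else None.
pose m' := play sigma sA.
have Hpre t : (t <= t0)%N -> hist m' t = hist m t.
  apply: eq_hist_play => s Hs; case: ifP => [/Hmodd //|_].
  by rewrite /sA size_mkseq Hs.
have Hm't0 : m' t0 = mv by rewrite /m' play_even // /sA size_mkseq ltnn eqxx.
exists m'; last by rewrite /hist mkseqS -/(hist _ _) Hpre // Hm't0.
split=> [t|t Ht]; last by rewrite /m' play_odd.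
have [Ht|Ht] := boolP (odd t); first by rewrite /m' play_odd.
rewrite /m' play_even // -/m' /sA size_mkseq.
case: ltngtP => [lt_t|//|->]; last by rewrite Hpre.
by rewrite Hpre // ltnW.
Qed.

Definition reachable sigma c := exists2 m, consistent_play sigma m &
  exists2 t, ~~ odd t & state (hist m t) = c.

Lemma reachable_safe sigma : B_winning_strategy F E sigma -> B_safe (reachable sigma).
Proof.
move=> [Hsigma Hwin] c [m [Hm Hmodd] [t Ht <-]].
split=> [q|mv Hmv]; first exact: Hwin m Hm Hmodd t q.
have [m' [Hm' Hm'odd] Hhist] := consistent_play_extend Hsigma (conj Hm Hmodd) Ht Hmv.
exists (m' t.+1); split; first by have := Hm' t.+1; rewrite Hhist state_rcons.
exists m' => //; exists t.+2; first by rewrite /= negbK.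
by rewrite state_histS Hhist state_rcons.
Qed.

Lemma B_wins_winning_pos : B_wins F E -> B_winning_pos (fun _ => None).
Proof.
move=> [sigma Hsigma]; exists (reachable sigma); split; first exact: reachable_safe.
exists (play sigma (fun _ => None)); last by exists 0.
split=> [t|t Ht]; last by rewrite play_odd.
by have [Ht|Ht] := boolP (odd t); [rewrite play_odd //; apply: Hsigma.1 | rewrite play_even].
Qed.

Definition safe_reply_spec W c b :=
  legal E c b /\ ((exists b', legal E c b' /\ W (apply_move c b')) -> W (apply_move c b)).

Definition safe_reply W c : move d A := epsilon (inhabits None) (safe_reply_spec W c).

Lemma safe_replyP W c : safe_reply_spec W c (safe_reply W c).
Proof.
apply: epsilon_spec.
case: (classic (exists b, legal E c b /\ W (apply_move c b))) => [[b [Hb Wb]]|Hnone].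
  by exists b; split=> // _.
by exists None; split=> // Hex; case: (Hnone Hex).
Qed.

Lemma winning_pos_B_wins : B_winning_pos (fun _ => None) -> B_wins F E.
Proof.
move=> [W [HW W0]]; exists (fun h => safe_reply W (state h)).
split=> [h|m Hm Hmodd]; first by case: (safe_replyP W (state h)).
have Weven s : W (state (hist m s.*2)).
  elim: s => [//|s IH]; have [_ Hstep] := HW _ IH.
  rewrite doubleS state_histS (Hmodd s.*2.+1) /= ?odd_double //.
  have [_ Hreply] := safe_replyP W (state (hist m s.*2.+1)).
  by apply: Hreply; rewrite state_histS; apply: Hstep.
move=> t q Hq; rewrite -(odd_double_half t); case: (odd t) => /=.
  apply: pattern_free_subcol (legal_subcol (Hm _)) _ _ Hq.
  by rewrite -state_histS -doubleS; case: (HW _ (Weven t./2.+1)).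
by case: (HW _ (Weven t./2)) => /(_ q Hq).
Qed.

Lemma B_winsE : B_wins F E <-> B_winning_pos (fun _ => None).
Proof. by split; [apply: B_wins_winning_pos | apply: winning_pos_B_wins]. Qed.

End SafeSets.

Section Restriction.

Variables (d : nat) (A : finType) (F : seq (fpattern d A)).
Implicit Types (c : partial_col d A) (mv b : move d A) (E : pred (cell d)).

Definition restrict E c : partial_col d A := fun x => if E x then c x else None.

Definition clip_move E mv : move d A :=
  if mv is Some (x, _) then (if E x then mv else None) else None.

Lemma clip_legal E c mv : legal E c mv -> clip_move E mv = mv.
Proof. by case: mv => [[i a] [/= ->]|]. Qed.

Lemma restrict_apply_clip E c c' mv :
  (forall x, c x = restrict E c' x) ->
  forall x, apply_move c (clip_move E mv) x = restrict E (apply_move c' mv) x.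
Proof.
rewrite /restrict; case: mv => [[i a]|] Hcc' x //=.
by case Ei: (E i) => /=; case: eqP => [->|_]; rewrite ?Ei ?Hcc' /restrict ?Ei.
Qed.

Lemma B_safe_restrict E E' W : {subset E <= E'} -> B_safe F E' W ->
  B_safe F E (fun c => exists c', W c' /\ forall x, c x = restrict E c' x).
Proof.
move=> sEE' HW c [c' [Wc' Hcc']]; have [Hfree Hstep] := HW c' Wc'; split.
  apply: pattern_free_subcol Hfree => x a.
  by rewrite Hcc' /restrict; case: ifP.
move=> mv Hmv; have Hmv' : legal E' c' mv.
  case: mv Hmv => [[i a]|] //= [Ei ci]; split; first exact: sEE'.
  by move: ci; rewrite Hcc' /restrict Ei.
have [b [Hb Wb]] := Hstep mv Hmv'.
have Hc1 := restrict_apply_clip mv Hcc'; rewrite (clip_legal Hmv) in Hc1.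
exists (clip_move E b); split.
  case: b Hb {Wb} => [[x a]|] //= [_ Hx]; case Ex: (E x) => //=.
  by rewrite Hc1 /restrict Ex.
by exists (apply_move (apply_move c' mv) b); split=> //; apply: restrict_apply_clip.
Qed.

Lemma B_wins_sub E E' : {subset E <= E'} -> B_wins F E' -> B_wins F E.
Proof.
move=> sEE'; rewrite !B_winsE => -[W [HW W0]].
eexists; split; first exact: B_safe_restrict sEE' HW.
by exists (fun _ => None); split=> // x; rewrite /restrict; case: ifP.
Qed.

End Restriction.

Section Boxes.

Variable d : nat.
Implicit Types x : cell d.

Lemma box_le j k x : (j <= k)%N -> box d j x -> box d k x.
Proof.
move=> Hjk /forallP Hx; apply/forallP => i; have /andP [H1 H2] := Hx i.
by apply/andP; split; lia.
Qed.

Lemma box_ex x : exists k, box d k x.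
Proof.
exists (\sum_(i < d) `|x ord0 i|)%N; apply/forallP => i.
have : (`|x ord0 i| <= \sum_(i < d) `|x ord0 i|)%N by rewrite (bigD1 i) //= leq_addr.
by move: (\sum_(i < d) _)%N => s Hs; apply/andP; split; lia.
Qed.

Definition box_cells n : seq (cell d) :=
  [seq (\row_i ((f i)%:Z - n%:Z))%R | f : {ffun 'I_d -> 'I_(n.*2.+1)}].

Lemma mem_box_cells n x : box d n x -> x \in box_cells n.
Proof.
move=> /forallP Hx; apply/imageP.
exists [ffun i => inord (absz (x ord0 i + n%:Z)%R)] => //.
apply/rowP => i; rewrite !mxE ffunE -[x 0%R i]/(x ord0 i).
have /andP [H1 H2] := Hx i.
rewrite inordK; lia.
Qed.

End Boxes.

Lemma infinite_pigeonhole (T : eqType) (P : T -> nat -> Prop) (L : seq T) :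
  (forall t j k, (j <= k)%N -> P t k -> P t j) ->
  (forall k, exists2 t, t \in L & P t k) -> exists2 t, t \in L & forall k, P t k.
Proof.
move=> Pdown; elim: L => [|t L IH] Hex; first by have [] := Hex 0%N.
case: (classic (forall k, P t k)) => [Ht|/not_all_ex_not [k1 Hk1]].
  by exists t; rewrite ?mem_head.
have [t' Lt' Ht'] : exists2 t', t' \in L & forall k, P t' k.
  apply: IH => k; have [t' tL Ht'] := Hex (maxn k k1).
  move: tL; rewrite in_cons => /predU1P [Et'|Lt']; last first.
    by exists t' => //; apply: Pdown (leq_maxl _ _) Ht'.
  by case: Hk1; rewrite -Et'; apply: Pdown (leq_maxr _ _) Ht'.
by exists t'; rewrite // in_cons Lt' orbT.
Qed.

Section Compactness.

Variables (d : nat) (A : finType) (F : seq (fpattern d A)).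
Implicit Types (c : partial_col d A) (mv b : move d A).

Definition agree_on k c c' := forall x, box d k x -> c' x = c x.

Definition approx k c c' := subcol c c' /\ agree_on k c c'.

Lemma approx_le j k c c' : (j <= k)%N -> approx k c c' -> approx j c c'.
Proof. by move=> Hjk [Hsub Hag]; split=> // x /(box_le Hjk) /Hag. Qed.

Lemma approx_apply k c c' mv :
  approx k c c' -> approx k (apply_move c mv) (apply_move c' mv).
Proof.
move=> [Hsub Hag]; split; first exact: subcol_apply_move.
by case: mv => [[i a]|] x Hx /=; [case: eqP => // _|]; apply: Hag.
Qed.

Definition outside_box j b := if b is Some (x, _) then ~~ box d j x else true.

Lemma approx_apply_outside E j c c' b :
  outside_box j b -> legal E c' b -> approx j c c' -> approx j c (apply_move c' b).
Proof.
move=> Hout Hb [Hsub Hag]; split; first exact: subcol_trans Hsub (legal_subcol Hb).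
case: b Hout {Hb} => [[y a]|] /= Hout x Hx; last exact: Hag.
by case: eqP => [Exy|_]; [move: Hout; rewrite -Exy Hx | apply: Hag].
Qed.

Definition limit_winning c := forall k, exists n c',
  [/\ (k <= n)%N, B_winning_pos F (box d n) c' & approx k c c'].

Definition box_reply c b k := exists n c',
  [/\ (k <= n)%N, approx k c c', legal (box d n) c' b &
      B_winning_pos F (box d n) (apply_move c' b)].

Lemma box_reply_le c b j k : (j <= k)%N -> box_reply c b k -> box_reply c b j.
Proof.
move=> Hjk [n [c' [Hkn Happ Hb Wb]]]; exists n, c'.
by split=> //; [apply: leq_trans Hkn | apply: approx_le Happ].
Qed.

Lemma box_reply_exists c mv : limit_winning c -> legal predT c mv ->
  forall k, exists b, box_reply (apply_move c mv) b k.
Proof.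
move=> Hc Hmv k.
have [k0 Hk0] : exists k0, forall n c',
    (k0 <= n)%N -> agree_on k0 c c' -> legal (box d n) c' mv.
  case: mv Hmv => [[i a] [_ ci]|_]; last by exists 0%N.
  have [k0 Hi] := box_ex i; exists k0 => n c' Hn Hag.
  by split; [apply: box_le Hn Hi | rewrite Hag].
have [n [c' [Hn Wc' Happ]]] := Hc (maxn k k0).
have Hmv' : legal (box d n) c' mv.
  apply: Hk0; first exact: leq_trans (leq_maxr _ _) Hn.
  by case: (approx_le (leq_maxr k k0) Happ).
have [_ /(_ mv Hmv') [b [Hb Wb]]] := B_winning_pos_safe Wc'.
exists b, n, (apply_move c' mv); split=> //; first exact: leq_trans (leq_maxl _ _) Hn.
by apply: approx_apply; apply: approx_le Happ; apply: leq_maxl.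
Qed.

Lemma box_reply_everywhere c b : (forall k, box_reply c b k) ->
  legal predT c b /\ limit_winning (apply_move c b).
Proof.
move=> Hb; split.
  case: b Hb => [[x a]|] Hb //; split=> //.
  have [k Hx] := box_ex x; have [n [c' [_ [_ Hag] [_ c'x] _]]] := Hb k.
  by rewrite -Hag.
move=> k; have [n [c' [Hn Happ _ Wb]]] := Hb k.
by exists n, (apply_move c' b); split=> //; apply: approx_apply.
Qed.

Lemma box_reply_escaping c :
  (forall j, exists b, outside_box j b /\ box_reply c b j) -> limit_winning c.
Proof.
move=> Hesc k; have [b [Hout [n [c' [Hn Happ Hb Wb]]]]] := Hesc k.
by exists n, (apply_move c' b); split=> //; apply: approx_apply_outside Hb Happ.
Qed.

Definition box_moves j : seq (move d A) :=
  [seq Some (x, a) | x <- box_cells d j, a <- enum A].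

Lemma mem_box_moves j b : ~~ outside_box j b -> b \in box_moves j.
Proof.
case: b => [[x a]|] //= /negPn Hx.
by apply: (allpairs_f (fun x a => Some (x, a))); [apply: mem_box_cells | rewrite mem_enum].
Qed.

Lemma limit_winning_reply c mv : limit_winning c -> legal predT c mv ->
  exists b, legal predT (apply_move c mv) b /\
            limit_winning (apply_move (apply_move c mv) b).
Proof.
move=> Hc Hmv; set c1 := apply_move c mv.
case: (classic (forall j, exists b, outside_box j b /\ box_reply c1 b j)) => [Hesc|Hnesc].
  by exists None; split=> //; apply: box_reply_escaping.
have [j0 Hj0] : exists j0, forall b, box_reply c1 b j0 -> ~~ outside_box j0 b.
  apply: NNPP => Hall; apply: Hnesc => j; apply: NNPP => Hj; apply: Hall.
  by exists j => b Hb; apply/negP => Hout; apply: Hj; exists b.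
have [|b _ Hb] := @infinite_pigeonhole _ (box_reply c1) (box_moves j0) (@box_reply_le c1).
  move=> k; have [b Hb] := box_reply_exists Hc Hmv (maxn k j0).
  exists b; last exact: box_reply_le (leq_maxl _ _) Hb.
  by apply/mem_box_moves/Hj0; apply: box_reply_le (leq_maxr _ _) Hb.
by exists b; apply: box_reply_everywhere.
Qed.

Lemma limit_winning_safe : B_safe F predT limit_winning.
Proof.
move=> c Hc; split=> [|mv]; last exact: limit_winning_reply.
have [n [c' [_ Wc' [Hsub _]]]] := Hc 0%N.
by apply: pattern_free_subcol Hsub _; case: (B_winning_pos_safe Wc').
Qed.

Lemma limit_winning_empty : (forall n, (1 <= n)%N -> B_wins F (box d n)) ->
  limit_winning (fun _ => None).
Proof.
move=> Hbox k; exists k.+1, (fun _ => None); split=> //.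
by apply/B_winsE/Hbox.
Qed.

End Compactness.

Unset Implicit Arguments.

Theorem lemma1 (d : nat) (A : finType) (F : seq (fpattern d A)) :
  (0 < d)%N ->
  (forall q, q \in F -> wf_pattern q) ->
  B_wins F (fun _ : cell d => true) <->
  (forall n : nat, (1 <= n)%N -> B_wins F (box d n)).
Proof.
move=> _ _; split=> [HZ n _ | Hbox]; first exact: B_wins_sub HZ.
apply/B_winsE; exists (limit_winning F); split; first exact: limit_winning_safe.
exact: limit_winning_empty.
Qed.
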